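(* Suppose $M:\alpha\mapsto M_\alpha=(E,\mathcal{B}_\alpha)$ is a matroid flock with support matroid $N=(E,\mathcal{B})$. Then $\mathcal{B}=\bigcup_{\alpha\in\mathbb{Z}^E}\mathcal{B}_\alpha$.
   Context: $E$ is a finite set; $(E,\mathcal{B})$ denotes the matroid on $E$ with basis set $\mathcal{B}$. $e_I:=\sum_{i\in I}e_i$ ($e_i$ unit vectors), $\mathbf{1}:=e_E$. A matroid flock of rank $d$ on $E$ is a map $M$ assigning to each $\alpha\in\mathbb{Z}^E$ a matroid $M_\alpha$ on $E$ of rank $d$ with (MF1) $M_\alpha/i=M_{\alpha+e_i}\setminus i$ for all $\alpha$, $i$ (contraction, deletion); and (MF2) $M_\alpha=M_{\alpha+\mathbf{1}}$. With $r_\alpha$ the rank function of $M_\alpha$, let $g$ be the unique function $\mathbb{Z}^E\to\mathbb{Z}$ with $g(0)=0$ and $g(\alpha+e_I)=g(\alpha)+r_\alpha(I)$ for all $\alpha,I$; for $d$-subsets $B$ of $E$ put $\nu^M(B):=\sup\{e_B^T\alpha-g(\alpha):\alpha\in\mathbb{Z}^E\}\in\mathbb{Z}\cup\{\infty\}$. The support matroid of $M$ is the matroid on $E$ whose bases are the $d$-subsets $B$ with $\nu^M(B)<\infty$. *)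

From mathcomp Require Import all_boot all_order all_algebra.
Set Implicit Arguments. Unset Strict Implicit. Unset Printing Implicit Defensive.
Import Order.TTheory GRing.Theory Num.Theory.
Local Open Scope ring_scope.

Section Matroids.
Variable E : finType.

Definition is_matroid (Bs : {set {set E}}) : Prop :=
  Bs != set0 /\
  forall B1 B2, B1 \in Bs -> B2 \in Bs -> forall x, x \in B1 :\: B2 ->
    exists2 y, y \in B2 :\: B1 & (B1 :\ x) :|: [set y] \in Bs.

Definition is_matroid_rank (d : nat) (Bs : {set {set E}}) : Prop :=
  is_matroid Bs /\ forall B, B \in Bs -> #|B| = d.

Definition is_loop (Bs : {set {set E}}) (i : E) : bool := [forall B in Bs, i \notin B].
Definition is_coloop (Bs : {set {set E}}) (i : E) : bool := [forall B in Bs, i \in B].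

(* Deletion M \ i and contraction M / i, as matroids on E - i
   (bases are subsets of E avoiding i). *)
Definition deletion (Bs : {set {set E}}) (i : E) : {set {set E}} :=
  if is_coloop Bs i then [set B :\ i | B in Bs] else [set B in Bs | i \notin B].

Definition contraction (Bs : {set {set E}}) (i : E) : {set {set E}} :=
  if is_loop Bs i then Bs else [set B :\ i | B in [set B in Bs | i \in B]].

Definition rk (Bs : {set {set E}}) (I : {set E}) : nat := \max_(B in Bs) #|I :&: B|.

Definition eI (I : {set E}) : {ffun E -> int} := [ffun j => ((j \in I) : nat)%:Z].
Definition e1 (i : E) : {ffun E -> int} := eI [set i].
Definition one : {ffun E -> int} := eI setT.

Definition is_flock (d : nat) (M : {ffun E -> int} -> {set {set E}}) : Prop :=
  (forall a, is_matroid_rank d (M a)) /\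
  (forall a i, contraction (M a) i = deletion (M (a + e1 i)) i) /\
  (forall a, M a = M (a + one)).

Definition is_g (M : {ffun E -> int} -> {set {set E}}) (g : {ffun E -> int} -> int) : Prop :=
  g 0 = 0 /\ forall a I, g (a + eI I) = g a + (rk (M a) I)%:Z.

(* nu^M(B) < infinity, i.e. sup_a (e_B^T a - g a) is finite *)
Definition nu_finite (g : {ffun E -> int} -> int) (B : {set E}) : Prop :=
  exists c : int, forall a : {ffun E -> int}, (\sum_(i in B) a i) - g a <= c.

Definition support_basis (d : nat) (g : {ffun E -> int} -> int) (B : {set E}) : Prop :=
  #|B| = d /\ nu_finite g B.

End Matroids.

(* For a d-subset B put phi(a) := e_B^T a - g(a), so that B is a support basis
   iff phi is bounded above.  By the defining recursion of g,
   phi(a + e_I) - phi(a) = |I :&: B| - r_a(I),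
   and phi is invariant under a -> a + 1 since r_a(E) = d = |B|.
   If B is a basis of M_a, then phi attains its maximum at a.  Up to adding a
   multiple of 1, any b satisfies a <= b, and b is reached from a by adding
   e_{I_1}, ..., e_{I_n} with I_k = {i | b_i - a_i >= k}.  The flock axioms
   make r_c(I) non-increasing in the coordinates of c outside I and invariant
   under c -> c + 1, so at each step r_c(I_k) >= r_a(I_k) >= |I_k :&: B|.
   Conversely, if phi is bounded, climbing along a -> a + e_B must stall at
   some a with |B| <= r_a(B), i.e. B is contained in, hence equal to, a basis
   of M_a. *)

From Pilot Require Import Defs.
From mathcomp Require Import all_boot all_order all_algebra.
From mathcomp Require Import zify ring.
Set Implicit Arguments. Unset Strict Implicit. Unset Printing Implicit Defensive.
Import Order.TTheory GRing.Theory Num.Theory.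
Local Open Scope ring_scope.

Lemma bounded_stall (T : Type) (f : T -> int) (s : T -> T) (c : int) (x0 : T) :
  (forall x, f x <= c) -> exists x, f (s x) <= f x.
Proof.
move=> fc; suff stall n x : c - f x <= n%:Z -> exists x, f (s x) <= f x.
  by apply: (stall (absz (c - f x0)) x0); rewrite abszE ler_norm.
elim: n x => [|n IHn] x cfx.
  by exists x; have := fc (s x); lia.
have [sxx | xsx] := lerP (f (s x)) (f x); first by exists x.
by apply: (IHn (s x)); lia.
Qed.

Lemma sum_eI (E : finType) (I B : {set E}) : \sum_(i in B) eI I i = #|I :&: B|%:Z.
Proof.
rewrite -sum1_card (eq_bigl (fun i => (i \in B) && (i \in I))); last first.
  by move=> i; rewrite inE andbC.
rewrite big_mkcondr /= -natz natr_sum; apply: eq_bigr => i _.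
by rewrite ffunE; case: (i \in I).
Qed.

Lemma one_mulrn_ffunE (E : finType) k (i : E) : (@Defs.one E *+ k) i = k%:Z.
Proof. by rewrite ffunMnE ffunE in_setT /= natz. Qed.

Section MatroidRank.
Variable E : finType.
Implicit Types (Bs : {set {set E}}) (I B : {set E}).

Lemma card_setI_le_rk Bs I B : B \in Bs -> (#|I :&: B| <= rk Bs I)%N.
Proof. by move=> BsB; apply: leq_bigmax_cond. Qed.

Lemma rk_contraction_le Bs I j : (rk (contraction Bs j) I <= rk Bs I)%N.
Proof.
rewrite /contraction; case: ifP => _ //.
apply/bigmax_leqP => B' /imsetP [B]; rewrite inE => /andP [BsB _] ->.
apply: leq_trans _ (card_setI_le_rk I BsB).
by apply/subset_leq_card/setIS/subsetDl.
Qed.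

Lemma rk_le_deletion Bs I j : is_matroid Bs -> j \notin I ->
  (rk Bs I <= rk (deletion Bs j) I)%N.
Proof.
move=> [_ exch] jNI.
have subD1j B : I :&: B \subset I :&: (B :\ j).
  apply/subsetP => x; rewrite !inE => /andP [xI ->].
  by rewrite xI andbT; apply: contraNneq jNI => <-.
rewrite /deletion; case: ifP => coloop; apply/bigmax_leqP => B BsB.
  apply: leq_trans _ (subset_leq_card (subD1j B)) (card_setI_le_rk _ _).
  exact: imset_f.
have [jB | jNB] := boolP (j \in B); last first.
  by apply: card_setI_le_rk; rewrite inE BsB.
move/negbT: coloop; rewrite negb_forall_in => /exists_inP [B2 BsB2 jNB2].
have jBB2 : j \in B :\: B2 by rewrite inE jB jNB2.
have [y] := exch B B2 BsB BsB2 j jBB2.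
rewrite inE => /andP [_ yB2] BsB3.
have B3Nj : j \notin (B :\ j) :|: [set y].
  by rewrite !inE eqxx negb_or /=; apply: contraNneq jNB2 => ->.
have subB3 : I :&: B \subset I :&: ((B :\ j) :|: [set y]).
  exact: subset_trans (subD1j B) (setIS _ (subsetUl _ _)).
apply: leq_trans _ (subset_leq_card subB3) (card_setI_le_rk _ _).
by rewrite inE BsB3 B3Nj.
Qed.

Lemma rk_setT d Bs : is_matroid_rank d Bs -> rk Bs setT = d.
Proof.
move=> [[/set0Pn [B BsB] _] card_d].
apply/eqP; rewrite eqn_leq; apply/andP; split.
  by apply/bigmax_leqP => B' BsB'; rewrite setTI card_d.
by rewrite -(card_d B BsB) -{1}(setTI B) card_setI_le_rk.
Qed.

Lemma basis_of_card_le_rk d Bs B : is_matroid_rank d Bs -> #|B| = d ->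
  (#|B| <= rk Bs B)%N -> B \in Bs.
Proof.
move=> [[Bs_neq0 _] card_d] cardB.
have Bs_gt0 : (0 < #|Bs|)%N by rewrite card_gt0.
rewrite /rk; have [B' BsB' ->] := eq_bigmax_cond (fun B' => #|B :&: B'|) Bs_gt0.
move=> le_B_BB'.
have sBB' : B \subset B' by apply/setIidPl/eqP; rewrite eqEcard subsetIl.
suff /eqP -> : B == B' :> {set E} by [].
by rewrite eqEcard sBB' (card_d B') //= cardB.
Qed.

End MatroidRank.

Section Flock.
Variables (E : finType) (d : nat) (M : {ffun E -> int} -> {set {set E}}).
Variable g : {ffun E -> int} -> int.
Hypothesis flockM : is_flock d M.
Hypothesis gM : is_g M g.
Implicit Types (a b w : {ffun E -> int}) (I B : {set E}).

Lemma flock_rank a : is_matroid_rank d (M a).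
Proof. by case: flockM. Qed.

Lemma flock_periodic a k : M (a + @Defs.one E *+ k) = M a.
Proof.
have [_ [_ periodic]] := flockM.
by elim: k => [|k IHk]; rewrite ?mulr0n ?addr0 // mulrSr addrA -periodic.
Qed.

Lemma rk_flock_add_e1 a I j : j \notin I -> (rk (M (a + e1 j)%R) I <= rk (M a) I)%N.
Proof.
have [_ [minor _]] := flockM => jNI.
apply: leq_trans _ (rk_le_deletion (proj1 (flock_rank (a + e1 j))) jNI) _.
by rewrite -minor rk_contraction_le.
Qed.

Lemma rk_flock_add_le a w I : (forall i, 0 <= w i) -> (forall i, i \in I -> w i = 0) ->
  (rk (M (a + w)%R) I <= rk (M a) I)%N.
Proof.
move=> w_ge0 w_I; move Dn : (\sum_i absz (w i))%N => n.
elim: n w w_ge0 w_I Dn => [|n IHn] w w_ge0 w_I Dn.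
  suff -> : w = 0 by rewrite addr0.
  apply/ffunP => i; rewrite ffunE; apply/eqP; rewrite -absz_eq0 -leqn0 -Dn.
  by rewrite (bigD1 i) //= leq_addr.
have [j wj_neq0 | w_eq0] := pickP (fun j => w j != 0); last first.
  by move: Dn; rewrite big1 // => i _; move/negbFE/eqP: (w_eq0 i) => ->.
have jNI : j \notin I by apply: contra wj_neq0 => /w_I ->.
have w'E i : (w - e1 j) i = w i - ((i == j) : nat)%:Z by rewrite !ffunE inE.
rewrite -[w](subrK (e1 j)) addrA; apply: leq_trans _ (rk_flock_add_e1 _ jNI) _.
apply: IHn => [i | i iI | ]; rewrite ?w'E.
- by have := w_ge0 i; case: eqP => [-> | _] /=; move: wj_neq0; lia.
- by rewrite w_I //; case: eqP iI => [-> | //]; rewrite (negbTE jNI).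
- have sum_w : (\sum_i `|w i|)%N = (\sum_i `|(w - e1 j)%R i|).+1.
    rewrite (bigD1 j) // [in RHS](bigD1 j) //= w'E eqxx -addSn.
    congr (_ + _)%N; last by apply: eq_bigr => i /negbTE ij; rewrite w'E ij subr0.
    by have := w_ge0 j; move: wj_neq0; lia.
  by move: Dn; rewrite sum_w => -[].
Qed.

Lemma rk_flock_layer a b I n : (forall i, b i - a i <= n%:Z) ->
  (forall i, i \in I -> b i - a i = n%:Z) -> (rk (M a) I <= rk (M b) I)%N.
Proof.
(* M a = M (a + n 1), and a + n 1 lies above b, with equality on I. *)
move=> le_ba eq_baI; rewrite -(flock_periodic a n).
have wE i : (a + @Defs.one E *+ n - b) i = a i + n%:Z - b i.
  by rewrite !ffunE one_mulrn_ffunE.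
rewrite -[X in M X](addrNK b) addrC; apply: rk_flock_add_le => [i | i iI].
  by rewrite wE; have := le_ba i; lia.
by rewrite wE; have := eq_baI i iI; lia.
Qed.

Definition nu_term B a : int := \sum_(i in B) a i - g a.

Lemma nu_term_add_eI B a I :
  nu_term B (a + eI I) = nu_term B a + #|I :&: B|%:Z - (rk (M a) I)%:Z.
Proof.
have [_ g_add] := gM.
rewrite /nu_term g_add; under eq_bigr do rewrite ffunE.
by rewrite big_split /= sum_eI; ring.
Qed.

Lemma nu_term_periodic B a k : #|B| = d -> nu_term B (a + @Defs.one E *+ k) = nu_term B a.
Proof.
move=> cardB; elim: k => [|k IHk]; first by rewrite mulr0n addr0.
by rewrite mulrSr addrA nu_term_add_eI setTI (rk_setT (flock_rank _)) cardB IHk; ring.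
Qed.

Lemma nu_term_le_above B a b n : B \in M a ->
  (forall i, 0 <= b i - a i <= n%:Z) -> nu_term B b <= nu_term B a.
Proof.
move=> Ba; elim: n b => [|n IHn] b ba.
  by suff -> : b = a by []; apply/ffunP => i; have := ba i; lia.
set I := [set i | b i - a i == n.+1%:Z].
have b'E i : (b - eI I) i = b i - ((i \in I) : nat)%:Z by rewrite !ffunE.
have ba' i : 0 <= (b - eI I) i - a i <= n%:Z.
  by rewrite b'E inE; have := ba i; case: eqP => /=; lia.
have ba'I i : i \in I -> (b - eI I) i - a i = n%:Z.
  by rewrite b'E => iI; rewrite iI; move: iI; rewrite inE => /eqP; lia.
have rk_le := rk_flock_layer (fun i => proj2 (andP (ba' i))) ba'I.
rewrite -[b](subrK (eI I)) nu_term_add_eI -addrA.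
apply: le_trans (IHn _ ba'); rewrite gerDl subr_le0 lez_nat.
exact: leq_trans _ (card_setI_le_rk I Ba) rk_le.
Qed.

Lemma nu_term_le_basis B a b : B \in M a -> nu_term B b <= nu_term B a.
Proof.
move=> Ba; have [k le_k] : {k | forall i, (absz (a i - b i)%R <= k)%N}.
  by exists (\max_i absz (a i - b i)%R)%N => i; apply: leq_bigmax.
rewrite -(nu_term_periodic b k (proj2 (flock_rank a) B Ba)).
apply: (@nu_term_le_above _ _ _ (k + k)) => // i.
have -> : (b + @Defs.one E *+ k) i = b i + k%:Z.
  by rewrite !ffunE one_mulrn_ffunE.
by have := le_k i; lia.
Qed.

Lemma nu_finite_basis B a : B \in M a -> nu_finite g B.
Proof. by move=> Ba; exists (nu_term B a) => b; apply: (nu_term_le_basis b Ba). Qed.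

Lemma basis_of_nu_finite B : #|B| = d -> nu_finite g B -> exists a, B \in M a.
Proof.
move=> cardB [c bounded].
have [a stall] := bounded_stall (fun b => b + eI B) 0 (bounded : forall b, nu_term B b <= c).
exists a; apply: basis_of_card_le_rk (flock_rank a) cardB _.
by move: stall; rewrite nu_term_add_eI setIid; lia.
Qed.

End Flock.

Theorem mainTheorem14 (E : finType) (d : nat)
  (M : {ffun E -> int} -> {set {set E}}) (g : {ffun E -> int} -> int) :
  is_flock d M -> is_g M g ->
  forall B : {set E}, support_basis d g B <-> exists a : {ffun E -> int}, B \in M a.
Proof.
move=> flockM gM B; split => [[cardB finB] | [a Ba]].
  exact: (basis_of_nu_finite flockM gM cardB finB).
split; first exact: (proj2 (flock_rank flockM a)).
exact: (nu_finite_basis flockM gM Ba).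
Qed.
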